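(* Let $(T_1,T_2)$ be a commuting pair of contractions on a complex Banach space $\mathbb X$ such that for $i=1,2$ the function $A_{T_i}(x)=(\|x\|^2-\|T_ix\|^2)^{1/2}$ defines a norm on $\mathbb X$. Put $\mathbb X_i=(\mathbb X,A_{T_i})$ for $i=1,2$, and consider the subspaces of $\mathbb X_1\oplus_2\mathbb X_2$ $$\widehat M_1=\{(T_2x,x):x\in\mathbb X\},\qquad \widehat M_2=\{(x,T_1x):x\in\mathbb X\}.$$ Suppose $\|T_1T_2\|<1$. Then: (i) with $T=T_1T_2$, the function $A_T(x)=(\|x\|^2-\|Tx\|^2)^{1/2}$ defines a norm on $\mathbb X$; (ii) $\widehat M_1$ and $\widehat M_2$ are closed in $\mathbb X_1\oplus_2\mathbb X_2$ and $\widehat M_1\cap\widehat M_2=\{\mathbf 0\}$; (iii) if there exist subspaces $\mathbb Y_1,\mathbb Y_2$ of $\mathbb X_1\oplus_2\mathbb X_2$ and a surjective linear isometry $\mathbb Y_1\to\mathbb Y_2$ such that $\widehat M_1\oplus_2\mathbb Y_1=\mathbb X_1\oplus_2\mathbb X_2=\widehat M_2\oplus_2\mathbb Y_2$, then there is a unitary $S$ on $\mathbb X_1\oplus_2\mathbb X_2$ with $S(\widehat M_1)=\widehat M_2$, more precisely $S(T_2x,x)=(x,T_1x)$ for all $x\in\mathbb X$.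
   Context: For a contraction $T$ on a normed space $\mathbb X$, $A_T:\mathbb X\to[0,\infty)$ is $A_T(x)=(\|x\|^2-\|Tx\|^2)^{1/2}$; ''$A_T$ defines a norm'' means $A_T$ is a norm on the vector space $\mathbb X$, and $(\mathbb X,A_T)$ denotes $\mathbb X$ equipped with this norm. $\mathbb X_1\oplus_2\mathbb X_2$ is the space of pairs with norm $\|(x_1,x_2)\|=(\|x_1\|^2+\|x_2\|^2)^{1/2}$. A unitary on a normed space is a surjective linear isometry. For subspaces $M,Y$ of a normed space $Z$, $M\oplus_2 Y=Z$ means every $z\in Z$ is uniquely $z=m+y$ with $m\in M$, $y\in Y$, and $\|m+y\|^2=\|m\|^2+\|y\|^2$ for all $m\in M,y\in Y$. *)

(* Complex scalars: R[i] (mathcomp-real-closed)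
   over R : realType.  Norms are taken real-valued: ||x|| := Re `|x|. *)
From mathcomp Require Import all_boot all_order all_algebra.
From mathcomp Require Import all_classical all_reals all_analysis.
From mathcomp Require Import complex.
Import Order.TTheory GRing.Theory Num.Theory.
Import numFieldNormedType.Exports.
Set Implicit Arguments. Unset Strict Implicit. Unset Printing Implicit Defensive.
Local Open Scope ring_scope.
Local Open Scope classical_set_scope.

Section Defs.
Variable R : realType.
Variable X : normedModType R[i].

Definition nrm (x : X) : R := complex.Re `|x|.
Definition cabs (a : R[i]) : R := complex.Re `|a|.

Definition contraction_op (T : X -> X) : Prop := forall x, nrm (T x) <= nrm x.

Definition A_op (T : X -> X) (x : X) : R :=
  Num.sqrt (nrm x ^+ 2 - nrm (T x) ^+ 2).

Definition is_norm (N : X -> R) : Prop :=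
  [/\ forall x, 0 <= N x,
      forall x, N x = 0 -> x = 0,
      forall (a : R[i]) x, N (a *: x) = cabs a * N x
    & forall x y, N (x + y) <= N x + N y].

Definition opnorm_lt1 (T : X -> X) : Prop :=
  exists c : R, c < 1 /\ forall x, nrm (T x) <= c * nrm x.

Definition sum2_norm (N1 N2 : X -> R) (z : X * X) : R :=
  Num.sqrt (N1 z.1 ^+ 2 + N2 z.2 ^+ 2).

Definition M1hat (T2 : X -> X) : set (X * X) := [set z | exists x, z = (T2 x, x)].
Definition M2hat (T1 : X -> X) : set (X * X) := [set z | exists x, z = (x, T1 x)].

Definition closed_wrt (N : X * X -> R) (S : set (X * X)) : Prop :=
  forall (u : nat -> X * X) (z : X * X),
    (forall n, S (u n)) -> (fun n => N (u n - z)) @ \oo --> (0 : R) -> S z.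

Definition lin_subspace (S : set (X * X)) : Prop :=
  S 0 /\ forall (a : R[i]) u v, S u -> S v -> S (a *: u + v).

Definition orth_decomp (N : X * X -> R) (M Y : set (X * X)) : Prop :=
  [/\ forall z, exists m y, [/\ M m, Y y & z = m + y],
      forall m y m' y', M m -> Y y -> M m' -> Y y' -> m + y = m' + y' ->
        m = m' /\ y = y'
    & forall m y, M m -> Y y -> N (m + y) ^+ 2 = N m ^+ 2 + N y ^+ 2].

Definition surj_lin_isometry (N : X * X -> R) (Y1 Y2 : set (X * X))
    (f : X * X -> X * X) : Prop :=
  [/\ forall y, Y1 y -> Y2 (f y),
      forall y', Y2 y' -> exists2 y, Y1 y & f y = y',
      forall (a : R[i]) u v, Y1 u -> Y1 v -> f (a *: u + v) = a *: f u + f v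
    & forall y, Y1 y -> N (f y) = N y].

Definition unitary (N : X * X -> R) (S : X * X -> X * X) : Prop :=
  [/\ forall (a : R[i]) u v, S (a *: u + v) = a *: S u + S v,
      forall z', exists z, S z = z'
    & forall z, N (S z) = N z].

End Defs.

From mathcomp Require Import all_boot all_order all_algebra.
From mathcomp Require Import all_classical all_reals all_analysis.
From mathcomp Require Import complex.
From mathcomp Require Import ring lra.
Import Order.TTheory GRing.Theory Num.Theory.
Import numFieldNormedType.Exports.
Local Open Scope ring_scope.
Local Open Scope classical_set_scope.

(* If ||T1 T2|| <= c < 1 then A_T >= (1 - c) ||.||, while A_T <= ||.|| always,
   so A_T is a norm equivalent to the complete norm of X as soon as it is
   subadditive.  By Pythagoras, and since T1 and T2 commute, the l^2 norm N of
   X1 (+)_2 X2 satisfies N (T2 x, x) = A_T x = N (x, T1 x): the maps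
   x |-> (T2 x, x) and x |-> (x, T1 x) embed (X, A_T) isometrically onto M1hat
   and M2hat.  This gives the triangle inequality for A_T and, by equivalence
   of the norms, the closedness of both graphs; a common point of the graphs
   is a fixed point of T1 T2, hence 0.  Finally (T2 x, x) |-> (x, T1 x) is a
   unitary from M1hat onto M2hat, and gluing it with the given isometry
   Y1 -> Y2 along the two orthogonal decompositions yields S. *)

Section RealSquares.
Variable R : realType.
Implicit Types a b c d p q : R.

Lemma le_of_sqr_le p q : 0 <= q -> p ^+ 2 <= q ^+ 2 -> p <= q.
Proof.
move=> q0 le_pq; apply: le_trans (ler_norm p) _.
by rewrite -sqrtr_sqr -[q](ger0_norm q0) -sqrtr_sqr ler_sqrt // sqr_ge0.
Qed.

Lemma eq_of_sqr_eq p q : 0 <= p -> 0 <= q -> p ^+ 2 = q ^+ 2 -> p = q.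
Proof. by move=> p0 q0 /eqP; rewrite eqrXn2 // => /eqP. Qed.

(* The triangle inequality for the modulus of [a +i* c] and [b +i* d]. *)
Lemma minkowski2 a b c d :
  Num.sqrt ((a + b) ^+ 2 + (c + d) ^+ 2) <=
  Num.sqrt (a ^+ 2 + c ^+ 2) + Num.sqrt (b ^+ 2 + d ^+ 2).
Proof.
have := ler_normD (a +i* c)%C (b +i* d)%C.
by rewrite !normc_def /= -rmorphD lecR.
Qed.

End RealSquares.

Section ComplexNormedSpace.
Context {R : realType} {X : normedModType R[i]}.
Implicit Types x y : X.

Lemma normr_nrm x : `|x| = (nrm x)%:C%C.
Proof.
have : 0 <= `|x| by [].
by rewrite /nrm; case: `|x| => a b; rewrite lecE /= => /andP[/eqP -> _].
Qed.

Lemma nrm_ge0 x : 0 <= nrm x.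
Proof. by have := normr_ge0 x; rewrite normr_nrm lecE /= => /andP[]. Qed.

Lemma nrm_eq0 x : nrm x = 0 -> x = 0.
Proof. by move=> nx0; apply/eqP; rewrite -normr_eq0 normr_nrm nx0. Qed.

Lemma nrmN x : nrm (- x) = nrm x.
Proof. by rewrite /nrm normrN. Qed.

Lemma cabs_ge0 (a : R[i]) : 0 <= cabs a.
Proof. by rewrite /cabs normc_def /= sqrtr_ge0. Qed.

Lemma nrmZ (a : R[i]) x : nrm (a *: x) = cabs a * nrm x.
Proof. by rewrite /nrm /cabs normrZ normr_nrm normc_def /= !mul0r subr0. Qed.

End ComplexNormedSpace.

Lemma cauchy_nrm_cvg (R : realType) (X : completeNormedModType R[i])
    (u : nat -> X) :
  (forall e : R, 0 < e -> exists N, forall n m, (N <= n)%N -> (N <= m)%N ->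
     nrm (u n - u m) < e) ->
  exists x, forall e : R, 0 < e ->
    exists N, forall n, (N <= n)%N -> nrm (u n - x) < e.
Proof.
move=> u_cauchy.
have u_cvg : cvg (u @ \oo).
  apply: cauchy_cvg; apply: cauchy_exP => e.
  rewrite ltcE /= => /andP[/eqP Ime Ree].
  have [N uN] := u_cauchy _ Ree; exists (u N), N => // n /= Nn.
  by rewrite -ball_normE /ball_ /= normr_nrm ltcE /= Ime eqxx uN.
exists (lim (u @ \oo)) => e e0.
have /cvgrPdist_lt/(_ e%:C%C) := u_cvg; rewrite ltcR => /(_ e0) [N _ uN].
by exists N => n /uN; rewrite distrC normr_nrm ltcR.
Qed.

Section DefectNorm.
Context {R : realType} {X : normedModType R[i]}.
Implicit Types (S : X -> X) (x : X).

Lemma contraction_comp [S1 S2] :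
  contraction_op S1 -> contraction_op S2 -> contraction_op (S1 \o S2).
Proof. by move=> c1 c2 x; apply: le_trans (c1 _) (c2 _). Qed.

Lemma opnorm_lt1_contraction [S] : opnorm_lt1 S -> contraction_op S.
Proof.
case=> c [c1 Sc] x; have := Sc x; have := nrm_ge0 x; have := nrm_ge0 (S x).
nra.
Qed.

Lemma sqr_A_op S x : contraction_op S ->
  A_op S x ^+ 2 = nrm x ^+ 2 - nrm (S x) ^+ 2.
Proof.
move=> cS; rewrite sqr_sqrtr // subr_ge0.
by apply: lerXn2r; rewrite ?nnegrE ?nrm_ge0 ?cS.
Qed.

Lemma A_op_le_nrm S x : A_op S x <= nrm x.
Proof.
apply: le_trans (_ : _ <= Num.sqrt (nrm x ^+ 2)) _.
  by rewrite ler_sqrt ?sqr_ge0 // gerDl oppr_le0 sqr_ge0.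
by rewrite sqrtr_sqr ger0_norm ?nrm_ge0.
Qed.

Lemma A_opZ (S : {linear X -> X}) (a : R[i]) x :
  A_op S (a *: x) = cabs a * A_op S x.
Proof.
rewrite /A_op [S _]linearZ !nrmZ !exprMn -mulrBr sqrtrM ?sqr_ge0 //.
by rewrite sqrtr_sqr ger0_norm ?cabs_ge0.
Qed.

Lemma A_opN (S : {linear X -> X}) x : A_op S (- x) = A_op S x.
Proof. by rewrite /A_op [S _]linearN !nrmN. Qed.

Lemma A_op_lower_bound [S] : opnorm_lt1 S ->
  exists2 k : R, 0 < k & forall x, k * nrm x <= A_op S x.
Proof.
move=> S_lt1; have [c [c1 Sc]] := S_lt1.
exists (1 - c) => [|x]; first by rewrite subr_gt0.
apply: le_of_sqr_le; first exact: sqrtr_ge0.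
rewrite sqr_A_op; last exact: opnorm_lt1_contraction.
have := Sc x; have := nrm_ge0 x; have := nrm_ge0 (S x).
move: (nrm x) (nrm (S x)) => a b b0 a0 ba.
have : 0 <= (c * a - b) * (a + b) by apply: mulr_ge0; lra.
have : 0 <= (1 - c) * a * b by rewrite mulr_ge0 ?mulr_ge0 //; lra.
nra.
Qed.

Lemma opnorm_lt1_fixed0 [S x] : opnorm_lt1 S -> S x = x -> x = 0.
Proof.
case=> c [c1 Sc] Sxx; apply: nrm_eq0.
have := Sc x; rewrite Sxx; have := nrm_ge0 x; nra.
Qed.

Lemma is_norm_A_op (S : {linear X -> X}) : opnorm_lt1 S ->
  (forall x y, A_op S (x + y) <= A_op S x + A_op S y) -> is_norm (A_op S).
Proof.
move=> S_lt1 A_subadd; have [k k0 Ak] := A_op_lower_bound S_lt1.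
split=> [x|x Ax0|a x|//].
- exact: sqrtr_ge0.
- apply: nrm_eq0; have := Ak x; rewrite Ax0; have := nrm_ge0 x; nra.
- exact: A_opZ.
Qed.

End DefectNorm.

Section Sum2Norm.
Context {R : realType} {X : normedModType R[i]} {N1 N2 : X -> R}.
Hypotheses (N1_ge0 : forall x, 0 <= N1 x) (N2_ge0 : forall x, 0 <= N2 x).
Local Notation N := (sum2_norm N1 N2).

Lemma sqr_sum2_norm z : N z ^+ 2 = N1 z.1 ^+ 2 + N2 z.2 ^+ 2.
Proof. by rewrite sqr_sqrtr // addr_ge0 ?sqr_ge0. Qed.

Lemma sum2_norm_eq0 : (forall x, N1 x = 0 -> x = 0) ->
  (forall x, N2 x = 0 -> x = 0) -> forall z, N z = 0 -> z = 0.
Proof.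
move=> N1_eq0 N2_eq0 z /eqP.
rewrite sqrtr_eq0 le_eqVlt ltNge addr_ge0 ?sqr_ge0 // orbF.
rewrite paddr_eq0 ?sqr_ge0 // !sqrf_eq0 => /andP[/eqP/N1_eq0 z1 /eqP/N2_eq0 z2].
by case: z z1 z2 => ? ? /= -> ->.
Qed.

Lemma sum2_normN : (forall x, N1 (- x) = N1 x) -> (forall x, N2 (- x) = N2 x) ->
  forall z, N (- z) = N z.
Proof. by move=> N1N N2N z; rewrite /sum2_norm /= N1N N2N. Qed.

Lemma sum2_normD : (forall x y, N1 (x + y) <= N1 x + N1 y) ->
  (forall x y, N2 (x + y) <= N2 x + N2 y) -> forall u v, N (u + v) <= N u + N v.
Proof.
move=> N1D N2D u v; rewrite /sum2_norm; apply: le_trans; last exact: minkowski2.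
rewrite ler_sqrt ?addr_ge0 ?sqr_ge0 //.
apply: lerD; apply: lerXn2r; rewrite ?nnegrE ?addr_ge0 //.
- exact: N1D.
- exact: N2D.
Qed.

End Sum2Norm.

Section GraphNorms.
Context {R : realType} {X : normedModType R[i]} {T1 T2 : X -> X}.
Hypotheses (T1_contr : contraction_op T1) (T2_contr : contraction_op T2).
Local Notation N := (sum2_norm (A_op T1) (A_op T2)).

Let T_contr : contraction_op (T1 \o T2) := contraction_comp T1_contr T2_contr.

Lemma sum2_norm_M1hat x : N (T2 x, x) = A_op (T1 \o T2) x.
Proof.
apply: eq_of_sqr_eq; rewrite ?sqrtr_ge0 //.
by rewrite sqr_sum2_norm ?sqr_A_op //=; [ring | exact: sqrtr_ge0 ..].
Qed.

Lemma sum2_norm_M2hat : (forall y, T1 (T2 y) = T2 (T1 y)) ->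
  forall x, N (x, T1 x) = A_op (T1 \o T2) x.
Proof.
move=> T12C x; apply: eq_of_sqr_eq; rewrite ?sqrtr_ge0 //.
by rewrite sqr_sum2_norm ?sqr_A_op //= ?T12C; [ring | exact: sqrtr_ge0 ..].
Qed.

End GraphNorms.

Section ClosedRange.
Context {R : realType} {X : completeNormedModType R[i]}.
Context {N : X * X -> R} {P : X -> X * X} {k : R}.
Hypotheses (N_ge0 : forall z, 0 <= N z) (N_eq0 : forall z, N z = 0 -> z = 0)
  (NN : forall z, N (- z) = N z) (ND : forall u v, N (u + v) <= N u + N v).
Hypotheses (PB : forall x y, P (x - y) = P x - P y) (k_gt0 : 0 < k)
  (P_lb : forall x, k * nrm x <= N (P x)) (P_ub : forall x, N (P x) <= nrm x).

Lemma N_distC u v : N (u - v) = N (v - u).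
Proof. by rewrite -NN opprB. Qed.

Lemma N_dist_triangle u v w : N (u - v) <= N (u - w) + N (w - v).
Proof. by have -> : u - v = (u - w) + (w - v) by rewrite addrA subrK. Qed.

Lemma closed_wrt_image : closed_wrt N [set z | exists x, z = P x].
Proof.
move=> u z Pu /cvgrPdist_lt u_cvg.
have near_z e : 0 < e -> exists M, forall n, (M <= n)%N -> N (u n - z) < e.
  move=> /u_cvg [M _ uM]; exists M => n /uM.
  by rewrite sub0r normrN ger0_norm.
have /choice [x uE] : forall n, exists x, u n = P x by exact: Pu.
have [y xy] : exists y, forall e : R, 0 < e ->
    exists M, forall n, (M <= n)%N -> nrm (x n - y) < e.
  apply: cauchy_nrm_cvg => e e0.
  have ke2_gt0 : 0 < k * e / 2 by rewrite divr_gt0 ?mulr_gt0.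
  have [M uM] := near_z _ ke2_gt0.
  exists M => n m /uM un /uM um; rewrite -(ltr_pM2l k_gt0).
  apply: le_lt_trans (P_lb _) _.
  rewrite PB -!uE; apply: le_lt_trans (N_dist_triangle _ _ z) _.
  by rewrite (N_distC z); lra.
exists y; apply/eqP; rewrite -subr_eq0; apply/eqP/N_eq0/le_anti.
rewrite N_ge0 andbT; apply/ler_addgt0Pr => e e0; rewrite add0r.
have e2_gt0 : 0 < e / 2 by rewrite divr_gt0.
have [M1 uM1] := near_z _ e2_gt0; have [M2 xM2] := xy _ e2_gt0.
pose n := maxn M1 M2; have := uM1 n (leq_maxl _ _).
have : N (u n - P y) <= nrm (x n - y) by rewrite uE -PB.
have := xM2 n (leq_maxr _ _); have := N_dist_triangle z (P y) (u n).
rewrite (N_distC z (u n)); lra.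
Qed.

End ClosedRange.

Section UnitaryExtension.
Context {R : realType} {X : normedModType R[i]}.
Context {N : X * X -> R} {M1 M2 Y1 Y2 : set (X * X)}.

Lemma surj_lin_isometry0 (f : X * X -> X * X) :
  lin_subspace Y1 -> surj_lin_isometry N Y1 Y2 f -> f 0 = 0.
Proof.
case=> Y1_0 _ [_ _ f_lin _]; apply: (addrI (f 0)).
by have := f_lin 1 0 0 Y1_0 Y1_0; rewrite !scale1r !addr0 => <-.
Qed.

Lemma orth_decomp_sum_map (g f : X * X -> X * X) : orth_decomp N M1 Y1 ->
  exists S : X * X -> X * X, forall m y, M1 m -> Y1 y -> S (m + y) = g m + f y.
Proof.
case=> D1e D1u _.
have /choice [p pP] : forall z, exists p : (X * X) * (X * X),
    [/\ M1 p.1, Y1 p.2 & z = p.1 + p.2].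
  by move=> z; have [m [y [Mm Yy ->]]] := D1e z; exists (m, y).
exists (fun z => g (p z).1 + f (p z).2) => m y Mm Yy.
have [Mp Yp mypE] := pP (m + y).
by have [<- <-] := D1u _ _ _ _ Mm Yy Mp Yp mypE.
Qed.

Context {g f : X * X -> X * X}.
Hypotheses (N_ge0 : forall z, 0 <= N z)
  (M1_lin : lin_subspace M1) (Y1_lin : lin_subspace Y1)
  (g_iso : surj_lin_isometry N M1 M2 g) (f_iso : surj_lin_isometry N Y1 Y2 f)
  (D1 : orth_decomp N M1 Y1) (D2 : orth_decomp N M2 Y2).

Lemma unitary_extension :
  exists S, [/\ unitary N S, S @` M1 = M2 & forall m, M1 m -> S m = g m].
Proof.
have [S Sdec] := orth_decomp_sum_map g f D1.
have [[_ M1_lc] [Y1_0 Y1_lc]] := (M1_lin, Y1_lin).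
have [gM2 g_onto g_lin g_isom] := g_iso.
have [fY2 f_onto f_lin f_isom] := f_iso.
have [[D1e _ D1p] [D2e _ D2p]] := (D1, D2).
have Sg m : M1 m -> S m = g m.
  move=> Mm; rewrite -[m]addr0 Sdec //.
  by rewrite (surj_lin_isometry0 f Y1_lin f_iso) !addr0.
exists S; split=> //; first split.
- move=> a u v; have [mu [yu [Mu Yu ->]]] := D1e u.
  have [mv [yv [Mv Yv ->]]] := D1e v.
  have Mmuv := M1_lc a _ _ Mu Mv; have Yyuv := Y1_lc a _ _ Yu Yv.
  by rewrite scalerDr addrACA !Sdec // g_lin // f_lin // scalerDr addrACA.
- move=> z; have [m' [y' [Mm' Yy' ->]]] := D2e z.
  have [m Mm <-] := g_onto _ Mm'; have [y Yy <-] := f_onto _ Yy'.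
  by exists (m + y); rewrite Sdec.
- move=> z; have [m [y [Mm Yy ->]]] := D1e z.
  apply: eq_of_sqr_eq => //; rewrite Sdec // D2p; last 2 first.
  - exact: gM2.
  - exact: fY2.
  by rewrite D1p // g_isom ?f_isom.
- apply/seteqP; split=> [_ [m Mm <-]|m' Mm'].
    by rewrite Sg //; exact: gM2.
  by have [m Mm <-] := g_onto _ Mm'; exists m => //; exact: Sg.
Qed.

End UnitaryExtension.

Section Graphs.
Context {R : realType} {X : normedModType R[i]} {T1 T2 : {linear X -> X}}.

Lemma lin_subspace_M1hat (T : {linear X -> X}) : lin_subspace (M1hat T).
Proof.
split; first by exists 0; rewrite linear0.
by move=> a _ _ [x ->] [y ->]; exists (a *: x + y); rewrite linearP.
Qed.

Lemma M1hat_I_M2hat : opnorm_lt1 (T1 \o T2) ->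
  M1hat T2 `&` M2hat T1 = [set 0].
Proof.
move=> T_lt1; apply/seteqP; split=> [_ [[x ->] [y [xE yE]]]|_ ->] /=.
  have /(opnorm_lt1_fixed0 T_lt1) -> : (T1 \o T2) x = x by rewrite /= xE yE.
  by rewrite linear0.
by split; exists 0; rewrite linear0.
Qed.

Lemma surj_lin_isometry_M1hat_M2hat : contraction_op T1 -> contraction_op T2 ->
  (forall x, T1 (T2 x) = T2 (T1 x)) ->
  surj_lin_isometry (sum2_norm (A_op T1) (A_op T2)) (M1hat T2) (M2hat T1)
    (fun z => (z.2, T1 z.2)).
Proof.
move=> T1_contr T2_contr T12C; split.
- by move=> _ [x ->]; exists x.
- by move=> _ [x ->]; exists (T2 x, x) => //; exists x.
- by move=> a u v _ _ /=; rewrite linearP.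
- by move=> _ [x ->] /=; rewrite sum2_norm_M2hat // sum2_norm_M1hat.
Qed.

End Graphs.

Theorem lemma2p2 (R : realType) (X : completeNormedModType R[i])
  (T1 T2 : {linear X -> X}) :
  (forall x, T1 (T2 x) = T2 (T1 x)) ->
  contraction_op T1 -> contraction_op T2 ->
  is_norm (A_op T1) -> is_norm (A_op T2) ->
  opnorm_lt1 (fun x => T1 (T2 x)) ->
  let N := sum2_norm (A_op T1) (A_op T2) in
  [/\ is_norm (A_op (fun x => T1 (T2 x))),
      closed_wrt N (M1hat T2) /\ closed_wrt N (M2hat T1) /\
        M1hat T2 `&` M2hat T1 = [set 0]
    & forall Y1 Y2 : set (X * X),
        lin_subspace Y1 -> lin_subspace Y2 ->
        (exists f, surj_lin_isometry N Y1 Y2 f) ->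
        orth_decomp N (M1hat T2) Y1 -> orth_decomp N (M2hat T1) Y2 ->
        exists S, [/\ unitary N S, S @` M1hat T2 = M2hat T1
                    & forall x, S (T2 x, x) = (x, T1 x)]].
Proof.
move=> T12C T1_contr T2_contr [A1_ge0 A1_eq0 _ A1D] [A2_ge0 A2_eq0 _ A2D].
move=> T_lt1 N.
have N_ge0 z : 0 <= N z := sqrtr_ge0 _.
have N_eq0 := sum2_norm_eq0 A1_eq0 A2_eq0.
have NN := sum2_normN (A_opN T1) (A_opN T2).
have ND := sum2_normD A1_ge0 A2_ge0 A1D A2D.
have NM1 := sum2_norm_M1hat T1_contr T2_contr.
have NM2 := sum2_norm_M2hat T1_contr T2_contr T12C.
have [k k_gt0 Ak] := A_op_lower_bound T_lt1.
have closed_graph (P : X -> X * X) : (forall x y, P (x - y) = P x - P y) ->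
    (forall x, N (P x) = A_op (T1 \o T2) x) ->
    closed_wrt N [set z | exists x, z = P x].
  move=> PB PN; apply: closed_wrt_image N_ge0 N_eq0 NN ND PB k_gt0 _ _ => x.
    by rewrite PN.
  by rewrite PN A_op_le_nrm.
split.
- apply: (is_norm_A_op (T1 \o T2)) T_lt1 _ => x y.
  rewrite -!NM1 [T2 (x + y)]linearD; exact: (ND (T2 x, x) (T2 y, y)).
- split; [|split]; last exact: M1hat_I_M2hat.
  + by apply: closed_graph NM1 => x y; rewrite linearB.
  + by apply: closed_graph NM2 => x y; rewrite linearB.
- move=> Y1 Y2 Y1_lin _ [f f_iso] D1 D2.
  have g_iso := surj_lin_isometry_M1hat_M2hat T1_contr T2_contr T12C.
  have [S [S_unitary SM1 Sg]] :=
    unitary_extension N_ge0 (lin_subspace_M1hat T2) Y1_lin g_iso f_iso D1 D2.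
  by exists S; split=> // x; rewrite Sg //; exists x.
Qed.
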